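(* Let $(E,\tau)$ be a locally solid vector lattice, where $\tau$ is a Fatou topology. Suppose that $C_\tau=E$ (which holds in particular when $E$ has the countable sup property, when $C_\tau$ has a countable order basis, or when $\tau$ is metrisable). Then every $\tau$-convergent net in $E$ has an embedded sequence that is uo-convergent to the same limit.
   Context: All vector lattices are real and Archimedean; linear topologies are Hausdorff. A locally solid topology on a vector lattice is a linear topology such that zero has a neighbourhood basis of solid sets. A net $(x_\alpha)$ order converges to $x$ if there is a net $y_\beta\downarrow0$ such that for each $\beta_0$ eventually $|x_\alpha-x|\leq y_{\beta_0}$; it uo-converges to $x$ if $|x_\alpha-x|\wedge|y|$ order converges to $0$ for every $y\in E$. A set is order closed if it contains the order limits of its nets. A Fatou topology is a locally solid topology in which zero has a neighbourhood basis of order closed solid sets. A sequence $(V_n)$ of neighbourhoods of zero is normal if $V_{n+1}+V_{n+1}\subseteq V_n$; the carrier $C_\tau$ is the union of the disjoint complements $N^{\mathrm d}$ where $N=\bigcap_nV_n$ ranges over intersections of normal sequences of solid $\tau$-neighbourhoods of zero. An order basis of a vector lattice $G$ is a non-empty $A\subseteq G$ with $A^{\mathrm d}=\{0\}$. $E$ has the countable sup property if every subset with a supremum contains an at most countable subset with the same supremum. Embedded sequence: given a net $(x_\alpha)_{\alpha\in A}$, a sequence $(x_{\alpha_n})_{n\geq1}$ with $\alpha_1\leq\alpha_2\leq\dotsb$, strictly increasing when $A$ has no largest element. *)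

From HB Require Import structures.
From mathcomp Require Import all_boot all_order all_algebra.
From mathcomp Require Import all_classical all_reals all_analysis.
Set Implicit Arguments. Unset Strict Implicit. Unset Printing Implicit Defensive.
Import Order.TTheory GRing.Theory Num.Theory.
Local Open Scope ring_scope.

Record dirset := DirSet {
  dcar :> Type;
  dle : dcar -> dcar -> Prop;
  dle_refl : forall a, dle a a;
  dle_trans : forall a b c, dle a b -> dle b c -> dle a c;
  dle_dir : forall a b, exists c, dle a c /\ dle b c;
  d_inh : inhabited dcar }.

Lemma nat_dir (a b : nat) : exists c, (a <= c)%N /\ (b <= c)%N.
Proof. by exists (maxn a b); rewrite leq_maxl leq_maxr. Qed.

Definition nat_dirset : dirset :=
  @DirSet nat (fun a b => (a <= b)%N) (fun a => leqnn a)
    (fun a b c h1 h2 => leq_trans h1 h2) nat_dir (inhabits 0%N).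

Record vector_lattice (R : realType) (E : lmodType R) := VectorLattice {
  vle : E -> E -> Prop;
  vle_refl : forall x, vle x x;
  vle_trans : forall x y z, vle x y -> vle y z -> vle x z;
  vle_anti : forall x y, vle x y -> vle y x -> x = y;
  vle_add : forall x y z, vle x y -> vle (x + z) (y + z);
  vle_scale : forall (a : R) x y, 0 <= a -> vle x y -> vle (a *: x) (a *: y);
  vjoin : E -> E -> E;
  vjoin_ubl : forall x y, vle x (vjoin x y);
  vjoin_ubr : forall x y, vle y (vjoin x y);
  vjoin_least : forall x y z, vle x z -> vle y z -> vle (vjoin x y) z;
  vmeet : E -> E -> E;
  vmeet_lbl : forall x y, vle (vmeet x y) x;
  vmeet_lbr : forall x y, vle (vmeet x y) y;
  vmeet_greatest : forall x y z, vle z x -> vle z y -> vle z (vmeet x y);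
  varchimedean : forall x y, vle 0 x -> (forall n : nat, vle (x *+ n) y) -> x = 0 }.

Section VL.
Variables (R : realType) (E : topologicalLmodType R) (L : vector_lattice E).

Definition vabs (x : E) : E := vjoin L x (- x).

Definition is_vinf (S : E -> Prop) (s : E) : Prop :=
  (forall y, S y -> vle L s y) /\
  (forall t, (forall y, S y -> vle L t y) -> vle L t s).

Definition decr_to0 (B : dirset) (y : B -> E) : Prop :=
  (forall b1 b2, dle b1 b2 -> vle L (y b2) (y b1)) /\
  is_vinf (fun z => exists b, z = y b) 0.

Definition order_conv (A : dirset) (x : A -> E) (l : E) : Prop :=
  exists (B : dirset) (y : B -> E), decr_to0 y /\
    forall b0, exists a0, forall a, dle a0 a -> vle L (vabs (x a - l)) (y b0).

Definition uo_conv (A : dirset) (x : A -> E) (l : E) : Prop :=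
  forall y : E, order_conv (fun a => vmeet L (vabs (x a - l)) (vabs y)) 0.

Definition tau_conv (A : dirset) (x : A -> E) (l : E) : Prop :=
  forall U : set E, nbhs l U -> exists a0, forall a, dle a0 a -> U (x a).

Definition solid (S : set E) : Prop :=
  forall x y, vle L (vabs x) (vabs y) -> S y -> S x.

Definition order_closed (S : set E) : Prop :=
  forall (A : dirset) (x : A -> E) (l : E),
    (forall a, S (x a)) -> order_conv x l -> S l.

Definition locally_solid : Prop :=
  forall U : set E, nbhs (0 : E) U ->
    exists V : set E, nbhs (0 : E) V /\ solid V /\ (forall z, V z -> U z).

Definition fatou_topology : Prop :=
  forall U : set E, nbhs (0 : E) U ->
    exists V : set E, nbhs (0 : E) V /\ solid V /\ order_closed V /\
      (forall z, V z -> U z).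

Definition normal_solid_seq (V : nat -> set E) : Prop :=
  (forall n, nbhs (0 : E) (V n) /\ solid (V n)) /\
  (forall n x y, V n.+1 x -> V n.+1 y -> V n (x + y)).

Definition disj_compl (N : set E) : set E :=
  fun x => forall y, N y -> vmeet L (vabs x) (vabs y) = 0.

Definition carrier_tau : set E :=
  fun x => exists V : nat -> set E, normal_solid_seq V /\
    disj_compl (fun z => forall n, V n z) x.

End VL.

Definition embedded_seq (A : dirset) (s : nat -> A) : Prop :=
  (forall n, dle (s n) (s n.+1)) /\
  ((~ exists m : A, forall a : A, dle a m) ->
     forall n, dle (s n) (s n.+1) /\ ~ dle (s n.+1) (s n)).

From HB Require Import structures.
From mathcomp Require Import all_boot all_order all_algebra.
From mathcomp Require Import all_classical all_reals all_analysis.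
From Stdlib Require List.
Set Implicit Arguments. Unset Strict Implicit. Unset Printing Implicit Defensive.
Import Order.TTheory GRing.Theory Num.Theory.
Local Open Scope ring_scope.
Local Open Scope classical_set_scope.

(** Since [C_τ = E] and [τ] is Fatou, every [e] is disjoint from the kernel
[⋂ T_n] of a normal sequence [(T_n)] of solid, order closed neighbourhoods of
zero.  Choose [s_0 ≤ s_1 ≤ …] such that [x(s_j) - l] lies in the [(j+1)]-st set
of the sequence of every earlier [x(s_i) - l].  Given [y], let [v ≥ 0] lie below
all eventual upper bounds of [b_j = |x(s_j) - l| ∧ |y|].  The Archimedean
property forces [v = 0] as soon as [v ⊥ b_j] for all [j]: then [z - v] is an
eventual upper bound of [(b_j)] whenever [z] is, so [n v ≤ |y|] for all [n].
For the disjointness fix [i]: the partial sums [S_n] of the tail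
[(|x(s_j) - l|)_(j > i)] stay in every [T_m], hence so do the [v ∧ S_n]; these
increase to [v] in order (by the same Archimedean argument) and [T_m] is order
closed, so [v] lies in the kernel of the sequence of [x(s_i) - l]. *)

Section VectorLatticeAlgebra.
Variables (R : realType) (E : lmodType R) (L : vector_lattice E).
Local Notation "x ⪯ y" := (vle L x y) (at level 70, no associativity).
Local Notation "x ⊓ y" := (vmeet L x y) (at level 40, left associativity).
Local Notation "x ⊔ y" := (vjoin L x y) (at level 40, left associativity).

Lemma vle_add2r z x y : (x + z ⪯ y + z) <-> (x ⪯ y).
Proof. by split=> [/(vle_add (- z))|/(vle_add z)]; rewrite ?addrK. Qed.

Lemma vle_addl z x y : x ⪯ y -> z + x ⪯ z + y.
Proof. by rewrite ![z + _]addrC => /(vle_add z). Qed.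

Lemma vle_add2 x y z t : x ⪯ y -> z ⪯ t -> x + z ⪯ y + t.
Proof. by move=> /(vle_add z) xy /(vle_addl y); apply: vle_trans. Qed.

Lemma vle_subr_addr x y z : (x ⪯ y - z) <-> (x + z ⪯ y).
Proof. by rewrite -(vle_add2r z) subrK. Qed.

Lemma subv_ge0 x y : (0 ⪯ y - x) <-> (x ⪯ y).
Proof. by rewrite vle_subr_addr add0r. Qed.

Lemma vle_opp x y : x ⪯ y -> - y ⪯ - x.
Proof. by move=> /subv_ge0 xy; apply/subv_ge0; rewrite opprK addrC. Qed.

Lemma vleI2 x y z t : x ⪯ z -> y ⪯ t -> x ⊓ y ⪯ z ⊓ t.
Proof.
move=> xz yt; apply: vmeet_greatest.
- exact: vle_trans (vmeet_lbl _ _ _) xz.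
- exact: vle_trans (vmeet_lbr _ _ _) yt.
Qed.

Lemma vmeetC x y : x ⊓ y = y ⊓ x.
Proof.
by apply: vle_anti; apply: vmeet_greatest; [apply: vmeet_lbr|apply: vmeet_lbl
  |apply: vmeet_lbr|apply: vmeet_lbl].
Qed.

Lemma vjoinC x y : x ⊔ y = y ⊔ x.
Proof.
by apply: vle_anti; apply: vjoin_least; [apply: vjoin_ubr|apply: vjoin_ubl
  |apply: vjoin_ubr|apply: vjoin_ubl].
Qed.

Lemma vjoinDr x y z : (x + z) ⊔ (y + z) = x ⊔ y + z.
Proof.
apply: vle_anti.
  by apply: vjoin_least; apply/vle_add2r; [apply: vjoin_ubl|apply: vjoin_ubr].
by apply/vle_subr_addr/vjoin_least; apply/vle_subr_addr;
  [apply: vjoin_ubl|apply: vjoin_ubr].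
Qed.

Lemma oppv_join x y : - (x ⊔ y) = - x ⊓ - y.
Proof.
apply: vle_anti.
  by apply: vmeet_greatest; apply: vle_opp; [apply: vjoin_ubl|apply: vjoin_ubr].
rewrite -[_ ⊓ _]opprK; apply: vle_opp; apply: vjoin_least;
  rewrite -[X in X ⪯ _]opprK; apply: vle_opp; [apply: vmeet_lbl|apply: vmeet_lbr].
Qed.

Lemma vmeet_add_join x y : x ⊓ y + x ⊔ y = x + y.
Proof.
have -> : x ⊓ y = - ((- x) ⊔ (- y)) by rewrite oppv_join !opprK.
have -> : x ⊔ y = (- x) ⊔ (- y) + (x + y).
  by rewrite -vjoinDr addKr [x + y]addrC addKr vjoinC.
by rewrite addrA addNr add0r.
Qed.

Lemma vle_add_sub_meet b q v z : v ⪯ q - q ⊓ b -> b ⪯ z -> q ⪯ z -> b + v ⪯ z.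
Proof.
move=> vq bz qz; apply: vle_trans (vle_addl b vq) _.
have -> : b + (q - q ⊓ b) = q ⊔ b.
  by apply/eqP; rewrite addrA subr_eq [_ + q ⊓ b]addrC vmeet_add_join addrC.
exact: vjoin_least.
Qed.

Lemma vsum_ge0 (I : Type) (r : seq I) (P : pred I) (F : I -> E) :
  (forall i, P i -> 0 ⪯ F i) -> 0 ⪯ \sum_(i <- r | P i) F i.
Proof.
apply: (big_ind (fun z => 0 ⪯ z)) => [|x y x0 y0]; first exact: vle_refl.
by rewrite -(addr0 0); apply: vle_add2.
Qed.

Section NonnegativeSums.
Variable f : nat -> E.
Hypothesis f_ge0 : forall j, 0 ⪯ f j.

Lemma vle_sum_nat_widen k n1 n2 : (n1 <= n2)%N ->
  \sum_(k <= j < n1) f j ⪯ \sum_(k <= j < n2) f j.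
Proof.
move=> n12; have [kn1|n1k] := leqP k n1.
  rewrite [X in _ ⪯ X](@big_cat_nat _ _ _ n1) //= -[X in X ⪯ _]addr0.
  by apply: vle_addl; apply: vsum_ge0.
by rewrite big_geq ?(ltnW n1k) //; apply: vsum_ge0.
Qed.

Lemma vle_sum_nat_last k j : (k <= j)%N -> f j ⪯ \sum_(k <= i < j.+1) f i.
Proof.
move=> kj; rewrite big_nat_recr //= -[X in X ⪯ _]add0r.
by apply: vle_add; apply: vsum_ge0.
Qed.

End NonnegativeSums.

Definition ev_ub (b : nat -> E) (z : E) : Prop :=
  exists k, forall j, (k <= j)%N -> b j ⪯ z.

Definition lb_ev_ub (b : nat -> E) (v : E) : Prop :=
  forall z, ev_ub b z -> v ⪯ z.

Lemma ev_ubI b z1 z2 : ev_ub b z1 -> ev_ub b z2 -> ev_ub b (z1 ⊓ z2).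
Proof.
move=> [k1 h1] [k2 h2]; exists (maxn k1 k2) => j; rewrite geq_max => /andP[j1 j2].
by apply: vmeet_greatest; [apply: h1|apply: h2].
Qed.

(* Every [u - n v] is an eventual upper bound of [b], so [n v ⪯ u - p ⪯ u]. *)
Lemma eq0_of_ev_ub_shift (b : nat -> E) u p v :
  (forall j, b j ⪯ u) -> lb_ev_ub b p -> 0 ⪯ p -> 0 ⪯ v ->
  (exists k, forall j z, (k <= j)%N -> b j ⪯ z -> p ⪯ z -> b j + v ⪯ z) ->
  v = 0.
Proof.
move=> bu pb p0 v0 [k hk].
have ub_shift n : ev_ub b (u - v *+ n).
  elim: n => [|n [k1 IH]]; first by exists 0%N => j _; rewrite mulr0n subr0.
  exists (maxn k k1) => j; rewrite geq_max => /andP[jk jk1].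
  rewrite mulrSr opprD addrA; apply/vle_subr_addr.
  exact: hk jk (IH _ jk1) (pb _ (ex_intro _ k1 IH)).
apply: (varchimedean v0) => n; apply/subv_ge0.
exact: vle_trans p0 (pb _ (ub_shift n)).
Qed.

End VectorLatticeAlgebra.

Section ZeroNeighbourhoods.
Variable M : topologicalZmodType.

Lemma nbhs0_split (W : set M) : nbhs 0 W ->
  exists2 U : set M, nbhs 0 U & forall x y, U x -> U y -> W (x + y).
Proof.
move=> W0; have /= := @add_continuous M (0, 0) W; rewrite addr0 => /(_ W0).
move=> [B] [B1 B2] BW; exists (B.1 `&` B.2); first exact: filterI.
by move=> x y [x1 _] [_ y2]; apply: (BW (x, y)).
Qed.

Lemma nbhs0_shift (W : set M) (l : M) : nbhs 0 W -> nbhs l (fun y => W (y - l)).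
Proof.
move=> W0; have /= := @add_continuous M (l, - l) W; rewrite subrr => /(_ W0).
move=> [B] [B1 B2] BW; apply: filterS B1 => y B1y.
by apply: (BW (y, - l)); split => //; apply: nbhs_singleton.
Qed.

End ZeroNeighbourhoods.

Section FatouTopology.
Variables (R : realType) (E : topologicalLmodType R) (L : vector_lattice E).
Local Notation "x ⪯ y" := (vle L x y) (at level 70, no associativity).
Local Notation "x ⊓ y" := (vmeet L x y) (at level 40, left associativity).
Local Notation "x ⊔ y" := (vjoin L x y) (at level 40, left associativity).
Local Notation vabs := (vabs L).

Lemma vabs_ge0 x : 0 ⪯ vabs x.
Proof.
have h2 : (0 : R) <= 2%:R^-1 by rewrite invr_ge0 ler0n.
have : 0 ⪯ (2%:R : R) *: vabs x.
  by rewrite scaler_nat mulr2n -(subrr x); apply: vle_add2;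
    [apply: vjoin_ubl|apply: vjoin_ubr].
by move=> /(vle_scale h2); rewrite scaler0 scalerA mulVf ?pnatr_eq0 // scale1r.
Qed.

Lemma vabs_id x : 0 ⪯ x -> vabs x = x.
Proof.
move=> x0; apply: vle_anti; last exact: vjoin_ubl.
apply: vjoin_least; first exact: vle_refl.
by have := vle_opp x0; rewrite oppr0 => /vle_trans; apply.
Qed.

Lemma vabs_neg x : x ⪯ 0 -> vabs x = - x.
Proof.
move=> x0; apply: vle_anti; last exact: vjoin_ubr.
apply: vjoin_least; last exact: vle_refl.
by have := vle_opp x0; rewrite oppr0; apply: vle_trans.
Qed.

(* Lower bounds [t] reduce to positive ones through [t ⊔ 0]. *)
Lemma is_vinf0 (S : E -> Prop) : (forall y, S y -> 0 ⪯ y) ->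
  (forall v, 0 ⪯ v -> (forall y, S y -> v ⪯ y) -> v = 0) -> is_vinf L S 0.
Proof.
move=> S_ge0 lb0; split=> // t tS.
have -> : 0 = t ⊔ 0.
  symmetry; apply: lb0 => [|y Sy]; first exact: vjoin_ubr.
  by apply: vjoin_least; [apply: tS|apply: S_ge0].
exact: vjoin_ubl.
Qed.

Lemma order_conv_dom (A : dirset) (x y : A -> E) (l : E) :
  decr_to0 L y -> (forall a, vabs (x a - l) ⪯ y a) -> order_conv L x l.
Proof.
move=> [y_decr y_inf] xy; exists A, y; split; first by split.
by move=> a0; exists a0 => a a0a; apply: vle_trans (xy a) (y_decr _ _ a0a).
Qed.

Lemma ev_ub_dir (b : nat -> E) (z1 z2 : {z | ev_ub L b z}) :
  exists z : {z | ev_ub L b z}, sval z ⪯ sval z1 /\ sval z ⪯ sval z2.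
Proof.
case: z1 z2 => [z1 b1] [z2 b2]; exists (exist _ _ (ev_ubI b1 b2)).
by split; [apply: vmeet_lbl|apply: vmeet_lbr].
Qed.

Definition ev_ub_dirset (b : nat -> E) (z0 : {z | ev_ub L b z}) : dirset :=
  @DirSet {z | ev_ub L b z} (fun z1 z2 => sval z2 ⪯ sval z1)
    (fun z => vle_refl L (sval z)) (fun _ _ _ h1 h2 => vle_trans h2 h1)
    (@ev_ub_dir b) (inhabits z0).

(* Witness net: the eventual upper bounds of [b], directed downwards. *)
Lemma order_conv0_ev_ub (b : nat -> E) (u : E) :
  (forall j, 0 ⪯ b j) -> (forall j, b j ⪯ u) ->
  (forall v, 0 ⪯ v -> lb_ev_ub L b v -> v = 0) ->
  order_conv L (A := nat_dirset) b 0.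
Proof.
move=> b0 bu lb0; have ub_u : ev_ub L b u by exists 0%N.
exists (ev_ub_dirset (exist _ u ub_u)), sval; split.
  split=> // ; apply: is_vinf0 => [_ [[z [k bz]] ->]|v v0 vb] /=.
    exact: vle_trans (b0 k) (bz k (leqnn k)).
  by apply: lb0 v0 _ => z bz; apply: (vb z); exists (exist _ z bz).
case=> z [k bz]; exists k => j kj /=; rewrite subr0 vabs_id //; exact: bz.
Qed.

Definition fatou_normal_seq (T : nat -> set E) : Prop :=
  normal_solid_seq L T /\ forall n, order_closed L (T n).

Lemma normal_seq_le (V : nat -> set E) m n :
  normal_solid_seq L V -> (m <= n)%N -> V n `<=` V m.
Proof.
move=> [V0 VD] /subnK <-; elim: (n - m)%N => [|d IH] z //.
rewrite addSn => Vz; apply: IH; rewrite -[z]addr0; apply: VD => //.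
exact: nbhs_singleton (V0 _).1.
Qed.

Lemma normal_seq_sum (V : nat -> set E) (f : nat -> E) k :
  normal_solid_seq L V -> (forall j, (k <= j)%N -> V j.+1 (f j)) ->
  forall n, V k (\sum_(k <= j < n) f j).
Proof.
move=> [V0 VD]; have V_0 i : V i 0 by exact: nbhs_singleton (V0 i).1.
suff sum_in d : forall k, (forall j, (k <= j)%N -> V j.+1 (f j)) ->
    V k (\sum_(k <= j < k + d) f j).
  move=> fV n; have [nk|kn] := leqP n k; first by rewrite big_geq //; apply: V_0.
  by rewrite -(subnKC (ltnW kn)); apply: sum_in.
elim: d => [|d IH] {}k fV; first by rewrite addn0 big_geq //; apply: V_0.
rewrite big_ltn -?addSnnS ?leq_addr //; apply: VD; first exact: fV.
by apply: IH => j /ltnW; apply: fV.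
Qed.

(* The partial sums [S n] of the tail of [a] lie in [T m], hence so do the
   [q ⊓ S n]; these increase to [q] in order and [T m] is order closed. *)
Lemma lb_ev_ub_in_fatou_seq (T : nat -> set E) (a b : nat -> E) u q k0 :
  fatou_normal_seq T -> (forall j, (k0 <= j)%N -> T j.+1 (a j)) ->
  (forall j, 0 ⪯ a j) -> (forall j, b j ⪯ a j) -> (forall j, b j ⪯ u) ->
  0 ⪯ q -> lb_ev_ub L b q -> forall m, T m q.
Proof.
move=> [TN Toc] aT a0 ba bu q0 qb m; set k := maxn k0 m.
pose S n := \sum_(k <= j < n) a j.
have S_ge0 n : 0 ⪯ S n by apply: vsum_ge0.
have meet_in n : T m (q ⊓ S n).
  have S_in : T m (S n).
    apply: (normal_seq_le TN (leq_maxr k0 m)); apply: normal_seq_sum => // j kj.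
    by apply: aT; apply: leq_trans kj; apply: leq_maxl.
  apply: (TN.1 m).2 S_in; rewrite !vabs_id.
  - exact: vmeet_lbr.
  - exact: S_ge0.
  - exact: vmeet_greatest q0 (S_ge0 n).
have gap_decr n1 n2 : (n1 <= n2)%N -> q - q ⊓ S n2 ⪯ q - q ⊓ S n1.
  move=> n12; apply/vle_addl/vle_opp/vleI2; first exact: vle_refl.
  exact: vle_sum_nat_widen.
apply: (Toc m nat_dirset _ q meet_in).
apply: (order_conv_dom (A := nat_dirset) (y := fun n => q - q ⊓ S n)); last first.
  move=> n; rewrite vabs_neg ?opprB; first exact: vle_refl.
  by rewrite -(vle_add2r L q) subrK add0r; apply: vmeet_lbl.
split; first exact: gap_decr.
apply: is_vinf0 => [_ [n ->]|v v0 vgap].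
  by apply/subv_ge0; apply: vmeet_lbl.
apply: (eq0_of_ev_ub_shift bu qb q0 v0); exists k => j z kj bz qz.
apply: vle_add_sub_meet bz qz.
apply: vle_trans (vgap _ (ex_intro _ j.+1 erefl)) _.
apply/vle_addl/vle_opp/vleI2; first exact: vle_refl.
exact: vle_trans (ba j) (vle_sum_nat_last a0 kj).
Qed.

Lemma fatou_half_nbhs (W : set E) : fatou_topology L -> nbhs 0 W ->
  exists V : set E, [/\ nbhs 0 V, solid L V, order_closed L V
    & forall x y, V x -> V y -> W (x + y)].
Proof.
move=> fatou /nbhs0_split [U U0 UW].
have [V [V0 [Vsolid [Voc VU]]]] := fatou U U0.
by exists V; split=> // x y /VU Ux /VU Uy; apply: UW.
Qed.

Lemma fatou_normal_refine (V : nat -> set E) : fatou_topology L ->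
  normal_solid_seq L V -> exists T, fatou_normal_seq T /\ forall n, T n `<=` V n.
Proof.
move=> fatou [V0 VD].
have H_ex (W : set E) : exists U : set E, nbhs 0 W ->
    [/\ nbhs 0 U, solid L U, order_closed L U
       & forall x y, U x -> U y -> W (x + y)].
  have [/(fatou_half_nbhs fatou) [U hU]|nW] := pselect (nbhs 0 W).
    by exists U.
  by exists W.
have [H H_spec] := choice H_ex.
pose T := fix T n := H (if n is n'.+1 then V n `&` T n' else V 0).
have TE n : T n = H (if n is n'.+1 then V n `&` T n' else V 0) by case: n.
have T_nbhs n : nbhs 0 (T n).
  elim: n => [|n IH]; first by have [] := H_spec _ (V0 0).1.
  by have [] := H_spec _ (filterI (V0 n.+1).1 IH).
have W_nbhs n : nbhs 0 (if n is n'.+1 then V n `&` T n' else V 0).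
  by case: n => [|n]; [exact: (V0 0).1|exact: filterI (V0 _).1 (T_nbhs n)].
have T_spec n := H_spec _ (W_nbhs n).
have T_sub n : T n `<=` (if n is n'.+1 then V n `&` T n' else V 0).
  have [T0 _ _ TD] := T_spec n; move=> z; rewrite TE => Tz.
  by rewrite -[z]addr0; apply: TD Tz (nbhs_singleton T0).
exists T; split; last by case=> [|n] z /T_sub //= [].
split; [split=> [n|n x y]|move=> n].
- by rewrite TE; have [] := T_spec n.
- by rewrite [T n.+1]TE => Tx Ty; have [_ _ _ /(_ x y Tx Ty) []] := T_spec n.+1.
- by rewrite TE; have [] := T_spec n.
Qed.

Lemma carrier_fatou_normal_seq e : fatou_topology L -> carrier_tau L e ->
  exists T, fatou_normal_seq T /\ disj_compl L (fun z => forall n, T n z) e.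
Proof.
move=> fatou [V [VN Ve]]; have [T [TN TV]] := fatou_normal_refine fatou VN.
by exists T; split=> // z Tz; apply: Ve => n; apply: TV.
Qed.

Lemma uo_conv_deep_tails (z : nat -> E) (l : E) (T : nat -> nat -> set E) :
  (forall i, fatou_normal_seq (T i) /\
             disj_compl L (fun w => forall n, T i n w) (z i - l)) ->
  (forall i j, (i < j)%N -> T i j.+1 (z j - l)) ->
  uo_conv L (A := nat_dirset) z l.
Proof.
move=> T_spec deep y; pose a j := vabs (z j - l).
have a_ge0 j : 0 ⪯ a j by apply: vabs_ge0.
apply: (order_conv0_ev_ub (u := vabs y)) => [j|j|v v0 vb].
- by apply: vmeet_greatest; apply: vabs_ge0.
- exact: vmeet_lbr.
have v_disj i : v ⊓ a i = 0.
  have [TN disj] := T_spec i.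
  have v_in n : T i n v.
    apply: (lb_ev_ub_in_fatou_seq (k0 := i.+1) (a := a) TN _ a_ge0 _ _ v0 vb).
    - move=> j ij; apply: (TN.1.1 j.+1).2 (deep i j ij).
      by rewrite vabs_id //; apply: vle_refl.
    - by move=> j; apply: vmeet_lbl.
    - by move=> j; apply: vmeet_lbr.
  by rewrite vmeetC -(vabs_id v0); apply: disj.
apply: (eq0_of_ev_ub_shift (u := vabs y) _ vb v0 v0).
  by move=> j; apply: vmeet_lbr.
exists 0%N => j w _ bw vw; apply: vle_add_sub_meet bw vw.
rewrite vle_subr_addr -[X in _ ⪯ X]addr0 -(v_disj j); apply: vle_addl.
by apply: vleI2; [apply: vle_refl|apply: vmeet_lbl].
Qed.

End FatouTopology.

Section EmbeddedSequences.
Variable A : dirset.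

Definition dir_eventually (P : A -> Prop) : Prop :=
  exists a0, forall a, dle a0 a -> P a.

Lemma dir_eventually_all_in (P : A -> A -> Prop) (h : seq A) :
  (forall a, dir_eventually (P a)) ->
  dir_eventually (fun b => forall a, List.In a h -> P a b).
Proof.
move=> evP; elim: h => [|a h [c1 h1]]; first by case: (d_inh A) => a0; exists a0.
have [c2 h2] := evP a; have [c [c1c c2c]] := dle_dir c1 c2.
exists c => b cb a' [<-|a'h].
- exact: h2 (dle_trans c2c cb).
- exact: h1 (dle_trans c1c cb) _ a'h.
Qed.

Lemma dir_eventually_next (c : A) (P : A -> Prop) : dir_eventually P ->
  exists d, [/\ dle c d, (exists b, ~ dle b c) -> ~ dle d c & P d].
Proof.
move=> [a0 Pa0]; have [c' [cc' a0c']] := dle_dir c a0.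
have [[b bc]|cmax] := pselect (exists b, ~ dle b c).
  have [d [c'd bd]] := dle_dir c' b; exists d; split=> [| _ dc|].
  - exact: dle_trans cc' c'd.
  - exact: bc (dle_trans bd dc).
  - exact: Pa0 (dle_trans a0c' c'd).
by exists c'; split=> //; apply: Pa0.
Qed.

Lemma exists_embedded_seq (P : A -> nat -> A -> Prop) :
  (forall a j, dir_eventually (P a j)) ->
  exists s : nat -> A, embedded_seq s /\ forall i j, (i < j)%N -> P (s i) j (s j).
Proof.
move=> evP; case: (d_inh A) => a0.
have next_ex (jh : nat * seq A) : exists d, [/\ dle (head a0 jh.2) d,
    (exists b, ~ dle b (head a0 jh.2)) -> ~ dle d (head a0 jh.2)
    & forall a, List.In a jh.2 -> P a jh.1.+1 d].
  exact/dir_eventually_next/dir_eventually_all_in.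
have [next next_spec] := choice next_ex.
pose hist := fix hist j :=
  if j is j'.+1 then next (j', hist j') :: hist j' else [:: a0].
pose s j := head a0 (hist j).
have s_hist i j : (i <= j)%N -> List.In (s i) (hist j).
  move=> /subnK <-; elim: (j - i)%N => [|d IH]; first by case: i => [|i]; left.
  by rewrite addSn; right.
exists s; split; last first.
  move=> i [|j] // ij; have [_ _] := next_spec (j, hist j).
  by apply; apply: s_hist.
split=> [n|nomax n]; first by have [] := next_spec (n, hist n).
have [sn_le sn_lt _] := next_spec (n, hist n); split=> //; apply: sn_lt.
by apply/existsNP => sn_max; apply: nomax; exists (s n).
Qed.

End EmbeddedSequences.

Theorem theorem5p4 (R : realType) (E : topologicalLmodType R)
    (L : vector_lattice E) :
  hausdorff_space E ->
  locally_solid L ->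
  fatou_topology L ->
  (forall x : E, carrier_tau L x) ->
  forall (A : dirset) (x : A -> E) (l : E),
    tau_conv x l ->
    exists s : nat -> A, embedded_seq s /\
      uo_conv L (A := nat_dirset) (fun n => x (s n)) l.
Proof.
move=> _ _ fatou carrier A x l x_l.
have [T T_spec] := choice (fun e => carrier_fatou_normal_seq fatou (carrier e)).
have T_ev a j : dir_eventually (fun b => T (x a - l) j.+1 (x b - l)).
  have [[T0 _] _] := (T_spec (x a - l)).1.
  exact: (x_l _ (nbhs0_shift l (T0 j.+1).1)).
have [s [s_emb s_deep]] := exists_embedded_seq T_ev.
exists s; split=> //.
by apply: (uo_conv_deep_tails (T := fun i => T (x (s i) - l))).
Qed.
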